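(* Let $N\ge 3$ and $\boldsymbol\theta\in\mathbb{R}^N$, and let $|0_L\rangle,|1_L\rangle,P,Z_L$ be the dephasing code associated with $\boldsymbol\theta$. Then $|0_L\rangle$ and $|1_L\rangle$ are orthonormal, and for all $\mathbf v,\mathbf u\in\mathbb{R}^N$: $P(\mathbf v\cdot\mathbf Z)P=(\mathbf v\cdot\cos(2\boldsymbol\theta))\,Z_L$ and $P(\mathbf v\cdot\mathbf Z)(\mathbf u\cdot\mathbf Z)P\in\mathbb{R}P$, where $\cos$ is applied entrywise. In particular, if $\cos(2\boldsymbol\theta)\perp\mathrm{col}(C)$, then $PSP\in\mathbb{R}P$ for every $S$ in the Lindblad span $\mathfrak{S}$ of the dephasing model, and $PHP=\tfrac12(\boldsymbol{\mathfrak h}\cdot\cos(2\boldsymbol\theta))Z_L$.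
   Context: Qubits $1,\dots,N$; $Z_j$, $X_j$ denote the Pauli $Z$, $X$ operators on qubit $j$ of $(\mathbb{C}^2)^{\otimes N}$, with $Z|0\rangle=|0\rangle$, $Z|1\rangle=-|1\rangle$. For $\mathbf v\in\mathbb{R}^N$, $\mathbf v\cdot\mathbf Z:=\sum_j v_jZ_j$. Dephasing model: $\boldsymbol{\mathfrak h}\in\mathbb{R}^N$, $H=\tfrac12\boldsymbol{\mathfrak h}\cdot\mathbf Z$; $C$ is a real symmetric positive semidefinite $N\times N$ matrix with orthonormal eigenvectors $\mathbf v_1,\dots,\mathbf v_N$ and eigenvalues $\lambda_1,\dots,\lambda_N\ge0$; $L_j=\sqrt{\lambda_j}\,\mathbf v_j\cdot\mathbf Z$; $\mathrm{col}(C)$ and $\ker(C)$ are the column space and kernel of $C$; the Lindblad span $\mathfrak{S}$ is the real span of $I$, all $L_i$ and all $L_iL_j$. Dephasing code for $\boldsymbol\theta\in\mathbb{R}^N$: $|0_L\rangle=\bigotimes_{j=1}^N(\cos\theta_j|0\rangle+i\sin\theta_j|1\rangle)$, $|1_L\rangle=X^{\otimes N}|0_L\rangle$, $P=|0_L\rangle\langle0_L|+|1_L\rangle\langle1_L|$, $Z_L=|0_L\rangle\langle0_L|-|1_L\rangle\langle1_L|$. *)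

(* Complex numbers are
   represented as pairs (re, im) of reals; vectors/operators on
   (C^2)^{tensor N} as functions on computational-basis indices
   k in {0, ..., 2^N - 1}, where bit j of k (Nat.testbit k j) is the state
   of qubit j (qubits are numbered 0..N-1 instead of 1..N). *)
From Stdlib Require Import Reals Lra Lia Arith List.
Open Scope R_scope.

Definition Cx : Type := (R * R)%type.
Definition RtoC (r : R) : Cx := (r, 0).
Definition Czero : Cx := (0, 0).
Definition Cone : Cx := (1, 0).
Definition Cadd (z w : Cx) : Cx := (fst z + fst w, snd z + snd w).
Definition Cmul (z w : Cx) : Cx :=
  (fst z * fst w - snd z * snd w, fst z * snd w + snd z * fst w).
Definition Cconj (z : Cx) : Cx := (fst z, - snd z).

Fixpoint Csum (n : nat) (f : nat -> Cx) : Cx :=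
  match n with O => Czero | S m => Cadd (Csum m f) (f m) end.
Fixpoint Cprod (n : nat) (f : nat -> Cx) : Cx :=
  match n with O => Cone | S m => Cmul (Cprod m f) (f m) end.
Fixpoint Rsum (n : nat) (f : nat -> R) : R :=
  match n with O => 0 | S m => Rsum m f + f m end.

Definition Rdot (N : nat) (v u : nat -> R) : R := Rsum N (fun j => v j * u j).
Definition Rmatvec (N : nat) (C : nat -> nat -> R) (x : nat -> R) : nat -> R :=
  fun i => Rsum N (fun j => C i j * x j).
Definition cos2theta (theta : nat -> R) : nat -> R := fun j => cos (2 * theta j).

Definition dim (N : nat) : nat := (2 ^ N)%nat.
Definition bit (k j : nat) : bool := Nat.testbit k j.

Definition Vec : Type := nat -> Cx.
Definition Op : Type := nat -> nat -> Cx.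

Definition inner (N : nat) (v w : Vec) : Cx :=
  Csum (dim N) (fun k => Cmul (Cconj (v k)) (w k)).
Definition mm (N : nat) (A B : Op) : Op :=
  fun i j => Csum (dim N) (fun k => Cmul (A i k) (B k j)).
Definition apply (N : nat) (A : Op) (v : Vec) : Vec :=
  fun i => Csum (dim N) (fun k => Cmul (A i k) (v k)).
Definition opadd (A B : Op) : Op := fun i j => Cadd (A i j) (B i j).
Definition opscale (z : Cx) (A : Op) : Op := fun i j => Cmul z (A i j).
Definition opsum (n : nat) (F : nat -> Op) : Op := fun i j => Csum n (fun a => F a i j).
Definition outer (v w : Vec) : Op := fun i j => Cmul (v i) (Cconj (w j)).

Definition opeq (N : nat) (A B : Op) : Prop :=
  forall i j, (i < dim N)%nat -> (j < dim N)%nat -> A i j = B i j.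
Definition inRP (N : nat) (A P : Op) : Prop :=
  exists r : R, opeq N A (opscale (RtoC r) P).

Definition Iop : Op := fun i k => if Nat.eqb i k then Cone else Czero.
Definition Zop (j : nat) : Op :=
  fun i k => if Nat.eqb i k then (if bit i j then RtoC (-1) else Cone) else Czero.
Definition allflipped (N i k : nat) : bool :=
  forallb (fun j => Bool.eqb (bit i j) (negb (bit k j))) (seq 0 N).
Definition Xall (N : nat) : Op := fun i k => if allflipped N i k then Cone else Czero.
Definition dotZ (N : nat) (v : nat -> R) : Op :=
  opsum N (fun j => opscale (RtoC (v j)) (Zop j)).

Definition ket0L (N : nat) (theta : nat -> R) : Vec :=
  fun k => Cprod N (fun j => if bit k j then (0, sin (theta j)) else (cos (theta j), 0)).
Definition ket1L (N : nat) (theta : nat -> R) : Vec := apply N (Xall N) (ket0L N theta).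
Definition Pcode (N : nat) (theta : nat -> R) : Op :=
  opadd (outer (ket0L N theta) (ket0L N theta)) (outer (ket1L N theta) (ket1L N theta)).
Definition ZL (N : nat) (theta : nat -> R) : Op :=
  opadd (outer (ket0L N theta) (ket0L N theta))
        (opscale (RtoC (-1)) (outer (ket1L N theta) (ket1L N theta))).
Definition sandwich (N : nat) (P A : Op) : Op := mm N (mm N P A) P.

Definition DephasingData (N : nat) (C : nat -> nat -> R) (vs : nat -> nat -> R)
    (lam : nat -> R) : Prop :=
  (forall i j, (i < N)%nat -> (j < N)%nat -> C i j = C j i) /\
  (forall x : nat -> R, 0 <= Rdot N x (Rmatvec N C x)) /\
  (forall a b, (a < N)%nat -> (b < N)%nat ->
      Rdot N (vs a) (vs b) = if Nat.eqb a b then 1 else 0) /\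
  (forall a i, (a < N)%nat -> (i < N)%nat -> Rmatvec N C (vs a) i = lam a * vs a i) /\
  (forall a, (a < N)%nat -> 0 <= lam a).

Definition Lind (N : nat) (vs : nat -> nat -> R) (lam : nat -> R) (a : nat) : Op :=
  opscale (RtoC (sqrt (lam a))) (dotZ N (vs a)).

Definition inLindbladSpan (N : nat) (vs : nat -> nat -> R) (lam : nat -> R) (S : Op) : Prop :=
  exists (a0 : R) (b : nat -> R) (c : nat -> nat -> R),
    opeq N S
      (opadd (opscale (RtoC a0) Iop)
        (opadd (opsum N (fun a => opscale (RtoC (b a)) (Lind N vs lam a)))
               (opsum N (fun a => opsum N (fun a' =>
                   opscale (RtoC (c a a')) (mm N (Lind N vs lam a) (Lind N vs lam a'))))))).

Definition perp_col (N : nat) (w : nat -> R) (C : nat -> nat -> R) : Prop :=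
  forall x : nat -> R, Rdot N w (Rmatvec N C x) = 0.

Definition Ham (N : nat) (h : nat -> R) : Op := opscale (RtoC (1/2)) (dotZ N h).

(* Every operator occurring in the theorem (v.Z, (v.Z)(u.Z), the Lindblad span, H) is
   diagonal in the computational basis, so P A P is determined by the four numbers
   <a_L| diag(d) |b_L>, a, b in {0, 1}, where d is the diagonal of A.  Both code states are
   product states, hence for a Z-string Z_S = prod_{j in S} Z_j these numbers factor over
   the qubits: a qubit in S contributes cos(2 t_j) (resp. -cos(2 t_j)) to <0_L|Z_S|0_L>
   (resp. <1_L|Z_S|1_L>), a qubit outside S contributes 1, and any qubit outside S makes the
   off-diagonal elements vanish.  With N >= 3 some qubit avoids {j, l}, so
     P Z_j P = cos(2 t_j) Z_L   and   P Z_j Z_l P in R P,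
   and by linearity P (v.Z) P = (v.cos 2t) Z_L and P (v.Z)(u.Z) P in R P.  Orthogonality
   of cos(2t) to col(C) kills the linear Lindblad terms, giving the statements about the
   Lindblad span and H. *)

From Stdlib Require Import Reals Lra Lia List Ring.
Open Scope R_scope.

Definition Copp (z : Cx) : Cx := (- fst z, - snd z).
Definition Csub (z w : Cx) : Cx := Cadd z (Copp w).

Ltac Cparts :=
  unfold Csub, Copp, Cadd, Cmul, Cconj, RtoC, Czero, Cone in *; simpl; f_equal.

Lemma Cx_ring : ring_theory Czero Cone Cadd Cmul Csub Copp (@eq Cx).
Proof. constructor; intros; repeat match goal with z : Cx |- _ => destruct z end; Cparts; ring. Qed.
Add Ring Cx_ring : Cx_ring.

Lemma Cconj_mul (z w : Cx) : Cconj (Cmul z w) = Cmul (Cconj z) (Cconj w).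
Proof. destruct z, w; Cparts; ring. Qed.
Lemma Cconj_one : Cconj Cone = Cone.
Proof. Cparts; ring. Qed.
Lemma RtoC_add (a b : R) : RtoC (a + b) = Cadd (RtoC a) (RtoC b).
Proof. Cparts; ring. Qed.
Lemma RtoC_mul (a b : R) : RtoC (a * b) = Cmul (RtoC a) (RtoC b).
Proof. Cparts; ring. Qed.
Lemma RtoC_opp (a : R) : RtoC (- a) = Copp (RtoC a).
Proof. Cparts; ring. Qed.

Lemma Csum_ext (n : nat) (f g : nat -> Cx) :
  (forall k, (k < n)%nat -> f k = g k) -> Csum n f = Csum n g.
Proof. induction n; intros H; simpl; auto. rewrite IHn, H by auto with arith. reflexivity. Qed.

Lemma Csum_add (n : nat) (f g : nat -> Cx) :
  Csum n (fun k => Cadd (f k) (g k)) = Cadd (Csum n f) (Csum n g).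
Proof. induction n; simpl; [Cparts; ring | rewrite IHn; ring]. Qed.

Lemma Csum_scal (n : nat) (c : Cx) (f : nat -> Cx) :
  Csum n (fun k => Cmul c (f k)) = Cmul c (Csum n f).
Proof. induction n; simpl; [Cparts; ring | rewrite IHn; ring]. Qed.

Lemma Csum_mulr (n : nat) (f : nat -> Cx) (c : Cx) :
  Cmul (Csum n f) c = Csum n (fun a => Cmul (f a) c).
Proof. induction n; simpl; [ring | rewrite <- IHn; ring]. Qed.

Lemma Csum_zero (n : nat) (f : nat -> Cx) :
  (forall k, (k < n)%nat -> f k = Czero) -> Csum n f = Czero.
Proof. induction n; intros H; simpl; auto. rewrite IHn, H by auto with arith. ring. Qed.

Lemma Csum_delta (n i : nat) (f : nat -> Cx) : (i < n)%nat ->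
  (forall k, (k < n)%nat -> k <> i -> f k = Czero) -> Csum n f = f i.
Proof.
  induction n; intros Hi H; [lia|]. simpl. destruct (Nat.eq_dec i n) as [->|Hne].
  - rewrite Csum_zero by (intros; apply H; lia). ring.
  - rewrite IHn, (H n) by (try lia; intros; apply H; lia). ring.
Qed.

Lemma Csum_app (n m : nat) (f : nat -> Cx) :
  Csum (n + m) f = Cadd (Csum n f) (Csum m (fun k => f (n + k)%nat)).
Proof.
  induction m; simpl; [rewrite Nat.add_0_r; ring|].
  rewrite Nat.add_succ_r; simpl. rewrite IHm; ring.
Qed.

Lemma Csum_mul (n m : nat) (f g : nat -> Cx) :
  Cmul (Csum n f) (Csum m g) = Csum n (fun a => Csum m (fun b => Cmul (f a) (g b))).
Proof. rewrite Csum_mulr. apply Csum_ext; intros. rewrite <- Csum_scal. reflexivity. Qed.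

Lemma Cprod_ext (n : nat) (f g : nat -> Cx) :
  (forall k, (k < n)%nat -> f k = g k) -> Cprod n f = Cprod n g.
Proof. induction n; intros H; simpl; auto. rewrite IHn, H by auto with arith. reflexivity. Qed.

Lemma Cprod_mul (n : nat) (f g : nat -> Cx) :
  Cprod n (fun k => Cmul (f k) (g k)) = Cmul (Cprod n f) (Cprod n g).
Proof. induction n; simpl; [ring | rewrite IHn; ring]. Qed.

Lemma Cconj_Cprod (n : nat) (f : nat -> Cx) :
  Cconj (Cprod n f) = Cprod n (fun k => Cconj (f k)).
Proof. induction n; simpl; [apply Cconj_one | rewrite Cconj_mul, IHn; reflexivity]. Qed.

Lemma Cprod_one (n : nat) (f : nat -> Cx) :
  (forall k, (k < n)%nat -> f k = Cone) -> Cprod n f = Cone.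
Proof. induction n; intros H; simpl; auto. rewrite IHn, H by auto with arith. ring. Qed.

Lemma Cprod_zero (n l : nat) (f : nat -> Cx) :
  (l < n)%nat -> f l = Czero -> Cprod n f = Czero.
Proof.
  induction n; intros Hl H; [lia|]. simpl. destruct (Nat.eq_dec l n) as [<-|Hne].
  - rewrite H; ring.
  - rewrite IHn by (auto; lia). ring.
Qed.

Lemma Cprod_single (n j : nat) (f : nat -> Cx) : (j < n)%nat ->
  (forall k, (k < n)%nat -> k <> j -> f k = Cone) -> Cprod n f = f j.
Proof.
  induction n; intros Hj H; [lia|]. simpl. destruct (Nat.eq_dec j n) as [->|Hne].
  - rewrite Cprod_one by (intros; apply H; lia). ring.
  - rewrite IHn, (H n) by (try lia; intros; apply H; lia). ring.
Qed.

Lemma Cprod_double (n j l : nat) (f : nat -> Cx) :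
  (j < n)%nat -> (l < n)%nat -> j <> l ->
  (forall m, (m < n)%nat -> m <> j -> m <> l -> f m = Cone) -> Cprod n f = Cmul (f j) (f l).
Proof.
  intros Hj Hl Hjl H.
  set (at_ i := fun m => if Nat.eqb m i then f i else Cone).
  assert (Hat : forall i, (i < n)%nat -> Cprod n (at_ i) = f i).
  { intros i Hi. rewrite (Cprod_single n i) by (auto; intros m _ Hm; unfold at_;
      apply Nat.eqb_neq in Hm; rewrite Hm; reflexivity).
    unfold at_. rewrite Nat.eqb_refl. reflexivity. }
  rewrite <- (Hat j), <- (Hat l), <- Cprod_mul by auto.
  apply Cprod_ext; intros m Hm. unfold at_.
  destruct (Nat.eqb_spec m j), (Nat.eqb_spec m l); subst; try lia.
  - ring.
  - ring.
  - rewrite H by auto. ring.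
Qed.

Lemma Rsum_scal (n : nat) (c : R) (f : nat -> R) : Rsum n (fun k => c * f k) = c * Rsum n f.
Proof. induction n; simpl; [ring | rewrite IHn; ring]. Qed.

Lemma Rsum_ext (n : nat) (f g : nat -> R) :
  (forall k, (k < n)%nat -> f k = g k) -> Rsum n f = Rsum n g.
Proof. induction n; intros H; simpl; auto. rewrite IHn, H by auto with arith. reflexivity. Qed.

Lemma Rsum_opp (n : nat) (f : nat -> R) : Rsum n (fun k => - f k) = - Rsum n f.
Proof. induction n; simpl; [ring | rewrite IHn; ring]. Qed.

(* The basis states of N + 1 qubits are k and 2^N + k for k < 2^N: the top qubit is
   0 resp. 1 and the lower N qubits are those of k. *)
Lemma bit_low (N k : nat) : (k < 2 ^ N)%nat -> bit k N = false.
Proof.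
  intros H. unfold bit. rewrite <- (Nat.mod_small k (2 ^ N)) by exact H.
  apply Nat.mod_pow2_bits_high; lia.
Qed.

Lemma add_pow2_mod_div (N k : nat) : (k < 2 ^ N)%nat ->
  ((2 ^ N + k) mod 2 ^ N = k /\ (2 ^ N + k) / 2 ^ N = 1)%nat.
Proof.
  intros H. replace (2 ^ N + k)%nat with (k + 1 * 2 ^ N)%nat by lia.
  assert (2 ^ N <> 0)%nat by (apply Nat.pow_nonzero; lia).
  rewrite Nat.Div0.mod_add, Nat.div_add, Nat.mod_small, Nat.div_small by assumption.
  split; reflexivity.
Qed.

Lemma bit_shift (N k j : nat) : (k < 2 ^ N)%nat -> (j < N)%nat -> bit (2 ^ N + k) j = bit k j.
Proof.
  intros H Hj. unfold bit. rewrite <- Nat.mod_pow2_bits_low with (n := N) by exact Hj.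
  rewrite (proj1 (add_pow2_mod_div N k H)). reflexivity.
Qed.

Lemma bit_top (N k : nat) : (k < 2 ^ N)%nat -> bit (2 ^ N + k) N = true.
Proof.
  intros H. unfold bit. replace N with (0 + N)%nat at 2 by lia.
  rewrite <- Nat.div_pow2_bits, (proj2 (add_pow2_mod_div N k H)). reflexivity.
Qed.

Lemma Csum_basis_prod (N : nat) (f : nat -> bool -> Cx) :
  Csum (dim N) (fun k => Cprod N (fun j => f j (bit k j)))
  = Cprod N (fun j => Cadd (f j false) (f j true)).
Proof.
  induction N as [|N IH]; [unfold dim; simpl; ring|].
  replace (dim (S N)) with (dim N + dim N)%nat by (unfold dim; simpl; lia).
  rewrite Csum_app.
  rewrite (Csum_ext _ _ (fun k => Cmul (Cprod N (fun j => f j (bit k j))) (f N false)))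
    by (intros k Hk; simpl; rewrite bit_low by exact Hk; reflexivity).
  rewrite (Csum_ext _ (fun k => Cprod (S N) (fun j => f j (bit (dim N + k) j)))
             (fun k => Cmul (Cprod N (fun j => f j (bit k j))) (f N true))).
  2: { intros k Hk. simpl. unfold dim in *. rewrite bit_top by exact Hk. f_equal.
       apply Cprod_ext. intros; rewrite bit_shift; auto. }
  rewrite <- !Csum_mulr, IH. simpl. ring.
Qed.

(** * The code states are product states *)

Definition prodstate (N : nat) (a : nat -> bool -> Cx) : Vec :=
  fun k => Cprod N (fun l => a l (bit k l)).

Definition amp (theta : nat -> R) (l : nat) (b : bool) : Cx :=
  if b then (0, sin (theta l)) else (cos (theta l), 0).

Lemma ket0L_prodstate (N : nat) (theta : nat -> R) :
  ket0L N theta = prodstate N (amp theta).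
Proof. reflexivity. Qed.

Lemma allflipped_prod (N : nat) (p : nat -> bool) :
  (if forallb p (seq 0 N) then Cone else Czero) = Cprod N (fun j => if p j then Cone else Czero).
Proof.
  induction N as [|N IH]; [reflexivity|].
  rewrite seq_S, forallb_app, Nat.add_0_l. cbn [Cprod forallb]. rewrite <- IH, Bool.andb_true_r.
  destruct (forallb p (seq 0 N)), (p N); cbn [andb]; ring.
Qed.

(* X^(x)N flips every qubit, so |1_L> has amplitudes a_l(b) = amp t_l (not b). *)
Lemma ket1L_prodstate (N : nat) (theta : nat -> R) (k : nat) : (k < dim N)%nat ->
  ket1L N theta k = prodstate N (fun l b => amp theta l (negb b)) k.
Proof.
  intros Hk. unfold ket1L, apply, Xall, allflipped.
  rewrite (Csum_ext _ _ (fun m => Cprod N (fun j =>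
     Cmul (if Bool.eqb (bit k j) (negb (bit m j)) then Cone else Czero) (amp theta j (bit m j)))))
    by (intros m Hm; rewrite Cprod_mul, allflipped_prod; reflexivity).
  refine (eq_trans (Csum_basis_prod N (fun j b =>
     Cmul (if Bool.eqb (bit k j) (negb b) then Cone else Czero) (amp theta j b))) _).
  unfold prodstate.
  apply Cprod_ext. intros l Hl. destruct (bit k l); cbn [negb Bool.eqb]; ring.
Qed.

(** * Matrix elements of Z-strings between the code states *)

(* Diagonal of the Z-string prod_{l < N, sel l} Z_l in the computational basis. *)
Definition zstring (N : nat) (sel : nat -> bool) (k : nat) : Cx :=
  Cprod N (fun l => if andb (sel l) (bit k l) then RtoC (-1) else Cone).

Definition matel (N : nat) (d : nat -> Cx) (x y : Vec) : Cx :=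
  Csum (dim N) (fun k => Cmul (Cconj (x k)) (Cmul (d k) (y k))).

Definition qubit_matel (a b : bool -> Cx) (z : bool) : Cx :=
  Cadd (Cmul (Cconj (a false)) (b false))
       (Cmul (Cconj (a true)) (Cmul (if z then RtoC (-1) else Cone) (b true))).

Lemma matel_ext (N : nat) (d1 d2 : nat -> Cx) (x1 x2 y1 y2 : Vec) :
  (forall k, (k < dim N)%nat -> d1 k = d2 k /\ x1 k = x2 k /\ y1 k = y2 k) ->
  matel N d1 x1 y1 = matel N d2 x2 y2.
Proof.
  intros H. unfold matel. apply Csum_ext. intros k Hk.
  destruct (H k Hk) as (-> & -> & ->). reflexivity.
Qed.

Lemma matel_add (N : nat) (d1 d2 : nat -> Cx) (x y : Vec) :
  matel N (fun k => Cadd (d1 k) (d2 k)) x y = Cadd (matel N d1 x y) (matel N d2 x y).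
Proof. unfold matel. rewrite <- Csum_add. apply Csum_ext; intros; ring. Qed.

Lemma matel_scal (N : nat) (c : Cx) (d : nat -> Cx) (x y : Vec) :
  matel N (fun k => Cmul c (d k)) x y = Cmul c (matel N d x y).
Proof. unfold matel. rewrite <- Csum_scal. apply Csum_ext; intros; ring. Qed.

Lemma matel_zero (N : nat) (x y : Vec) : matel N (fun _ => Czero) x y = Czero.
Proof. unfold matel. apply Csum_zero; intros; ring. Qed.

Lemma matel_prodstate (N : nat) (sel : nat -> bool) (a b : nat -> bool -> Cx) :
  matel N (zstring N sel) (prodstate N a) (prodstate N b)
  = Cprod N (fun l => qubit_matel (a l) (b l) (sel l)).
Proof.
  unfold matel, zstring, prodstate.
  rewrite (Csum_ext _ _ (fun k => Cprod N (fun l => Cmul (Cconj (a l (bit k l)))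
     (Cmul (if andb (sel l) (bit k l) then RtoC (-1) else Cone) (b l (bit k l))))))
    by (intros; rewrite Cconj_Cprod, <- !Cprod_mul; reflexivity).
  refine (eq_trans (Csum_basis_prod N (fun l c => Cmul (Cconj (a l c))
     (Cmul (if andb (sel l) c then RtoC (-1) else Cone) (b l c)))) _).
  apply Cprod_ext. intros l _. unfold qubit_matel. destruct (sel l); cbn [andb]; ring.
Qed.

Lemma qubit_matel_amp (theta : nat -> R) (l : nat) (z : bool) :
  qubit_matel (amp theta l) (amp theta l) z = if z then RtoC (cos (2 * theta l)) else Cone.
Proof.
  pose proof (sin2_cos2 (theta l)). rewrite cos_2a. unfold Rsqr in *.
  destruct z; unfold qubit_matel, amp; Cparts; nra.
Qed.

Lemma qubit_matel_flipped (theta : nat -> R) (l : nat) (z : bool) :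
  qubit_matel (fun b => amp theta l (negb b)) (fun b => amp theta l (negb b)) z
  = if z then RtoC (- cos (2 * theta l)) else Cone.
Proof.
  pose proof (sin2_cos2 (theta l)). rewrite cos_2a. unfold Rsqr in *.
  destruct z; unfold qubit_matel, amp; simpl; Cparts; nra.
Qed.

Lemma qubit_matel_cross (theta : nat -> R) (l : nat) :
  qubit_matel (amp theta l) (fun b => amp theta l (negb b)) false = Czero /\
  qubit_matel (fun b => amp theta l (negb b)) (amp theta l) false = Czero.
Proof. unfold qubit_matel, amp; simpl; split; Cparts; ring. Qed.

Section CodeMatrixElements.
Variables (N : nat) (theta : nat -> R) (sel : nat -> bool).

Let ket1_prod : Vec := prodstate N (fun l b => amp theta l (negb b)).

Lemma zstring_matel00 :
  matel N (zstring N sel) (ket0L N theta) (ket0L N theta)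
  = Cprod N (fun l => if sel l then RtoC (cos (2 * theta l)) else Cone).
Proof.
  rewrite ket0L_prodstate, matel_prodstate.
  apply Cprod_ext; intros; apply qubit_matel_amp.
Qed.

Lemma zstring_matel11 :
  matel N (zstring N sel) (ket1L N theta) (ket1L N theta)
  = Cprod N (fun l => if sel l then RtoC (- cos (2 * theta l)) else Cone).
Proof.
  rewrite (matel_ext N _ (zstring N sel) _ ket1_prod _ ket1_prod)
    by (intros; repeat split; try apply ket1L_prodstate; auto).
  unfold ket1_prod. rewrite matel_prodstate.
  apply Cprod_ext; intros; apply qubit_matel_flipped.
Qed.

Lemma zstring_matel_cross (l0 : nat) : (l0 < N)%nat -> sel l0 = false ->
  matel N (zstring N sel) (ket0L N theta) (ket1L N theta) = Czero /\
  matel N (zstring N sel) (ket1L N theta) (ket0L N theta) = Czero.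
Proof.
  intros Hl0 Hsel. split.
  - rewrite (matel_ext N _ (zstring N sel) _ (ket0L N theta) _ ket1_prod)
      by (intros; repeat split; try apply ket1L_prodstate; auto).
    unfold ket1_prod. rewrite ket0L_prodstate, matel_prodstate.
    apply (Cprod_zero _ l0 _ Hl0). rewrite Hsel. apply qubit_matel_cross.
  - rewrite (matel_ext N _ (zstring N sel) _ ket1_prod _ (ket0L N theta))
      by (intros; repeat split; try apply ket1L_prodstate; auto).
    unfold ket1_prod. rewrite ket0L_prodstate, matel_prodstate.
    apply (Cprod_zero _ l0 _ Hl0). rewrite Hsel. apply qubit_matel_cross.
Qed.

End CodeMatrixElements.

(** * Compression of diagonal operators to the code space *)

(* diag(d) compresses to the logical operator r0 |0_L><0_L| + r1 |1_L><1_L|. *)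
Definition Compresses (N : nat) (theta : nat -> R) (d : nat -> Cx) (r0 r1 : R) : Prop :=
  matel N d (ket0L N theta) (ket0L N theta) = RtoC r0 /\
  matel N d (ket1L N theta) (ket1L N theta) = RtoC r1 /\
  matel N d (ket0L N theta) (ket1L N theta) = Czero /\
  matel N d (ket1L N theta) (ket0L N theta) = Czero.

Definition CompressesToScalar (N : nat) (theta : nat -> R) (d : nat -> Cx) : Prop :=
  exists r : R, Compresses N theta d r r.

Section CompressionLinearity.
Variables (N : nat) (theta : nat -> R).

Lemma Compresses_ext (d1 d2 : nat -> Cx) (r0 r1 : R) :
  (forall k, (k < dim N)%nat -> d1 k = d2 k) ->
  Compresses N theta d1 r0 r1 -> Compresses N theta d2 r0 r1.
Proof.
  intros H. unfold Compresses.
  rewrite !(matel_ext N d2 d1 _ _ _ _ (fun k Hk => conj (eq_sym (H k Hk)) (conj eq_refl eq_refl))).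
  auto.
Qed.

Lemma Compresses_add (d1 d2 : nat -> Cx) (r0 r1 s0 s1 : R) :
  Compresses N theta d1 r0 r1 -> Compresses N theta d2 s0 s1 ->
  Compresses N theta (fun k => Cadd (d1 k) (d2 k)) (r0 + s0) (r1 + s1).
Proof.
  intros (A0 & A1 & A2 & A3) (B0 & B1 & B2 & B3). unfold Compresses.
  rewrite !matel_add, A0, A1, A2, A3, B0, B1, B2, B3, !RtoC_add.
  repeat split; ring.
Qed.

Lemma Compresses_scal (c : R) (d : nat -> Cx) (r0 r1 : R) :
  Compresses N theta d r0 r1 ->
  Compresses N theta (fun k => Cmul (RtoC c) (d k)) (c * r0) (c * r1).
Proof.
  intros (A0 & A1 & A2 & A3). unfold Compresses.
  rewrite !matel_scal, A0, A1, A2, A3, !RtoC_mul. repeat split; ring.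
Qed.

Lemma Compresses_sum (n : nat) (F : nat -> nat -> Cx) (r0 r1 : nat -> R) :
  (forall a, (a < n)%nat -> Compresses N theta (F a) (r0 a) (r1 a)) ->
  Compresses N theta (fun k => Csum n (fun a => F a k)) (Rsum n r0) (Rsum n r1).
Proof.
  induction n as [|n IH]; intros H; simpl.
  - unfold Compresses. rewrite !matel_zero. repeat split.
  - apply (Compresses_add (fun k => Csum n (fun a => F a k)) (F n)); auto.
Qed.

Lemma Scalar_ext (d1 d2 : nat -> Cx) :
  (forall k, (k < dim N)%nat -> d1 k = d2 k) ->
  CompressesToScalar N theta d1 -> CompressesToScalar N theta d2.
Proof. intros H [r Hr]. exists r. apply (Compresses_ext d1); assumption. Qed.

Lemma Scalar_add (d1 d2 : nat -> Cx) :
  CompressesToScalar N theta d1 -> CompressesToScalar N theta d2 ->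
  CompressesToScalar N theta (fun k => Cadd (d1 k) (d2 k)).
Proof. intros [r H1] [s H2]. exists (r + s). apply Compresses_add; assumption. Qed.

Lemma Scalar_scal (c : R) (d : nat -> Cx) :
  CompressesToScalar N theta d -> CompressesToScalar N theta (fun k => Cmul (RtoC c) (d k)).
Proof. intros [r H]. exists (c * r). apply Compresses_scal; assumption. Qed.

Lemma Scalar_sum (n : nat) (F : nat -> nat -> Cx) :
  (forall a, (a < n)%nat -> CompressesToScalar N theta (F a)) ->
  CompressesToScalar N theta (fun k => Csum n (fun a => F a k)).
Proof.
  induction n as [|n IH]; intros H; simpl.
  - exists 0. unfold Compresses. rewrite !matel_zero. repeat split.
  - apply (Scalar_add (fun k => Csum n (fun a => F a k)) (F n)); auto.
Qed.

End CompressionLinearity.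

Definition zdiag (j k : nat) : Cx := if bit k j then RtoC (-1) else Cone.

Lemma zdiag_zstring (N j k : nat) : (j < N)%nat ->
  zdiag j k = zstring N (fun l => Nat.eqb l j) k.
Proof.
  intros Hj. unfold zstring. rewrite (Cprod_single N j).
  - rewrite Nat.eqb_refl. reflexivity.
  - exact Hj.
  - intros l _ Hl. apply Nat.eqb_neq in Hl. rewrite Hl. reflexivity.
Qed.

Lemma zdiag2_zstring (N j l k : nat) : (j < N)%nat -> (l < N)%nat ->
  Cmul (zdiag j k) (zdiag l k) = zstring N (fun m => xorb (Nat.eqb m j) (Nat.eqb m l)) k.
Proof.
  intros Hj Hl. rewrite (zdiag_zstring N j k Hj), (zdiag_zstring N l k Hl).
  unfold zstring. rewrite <- Cprod_mul. apply Cprod_ext. intros m _.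
  destruct (Nat.eqb m j), (Nat.eqb m l), (bit k m); cbn [andb xorb]; Cparts; ring.
Qed.

(* P Z_j P = cos(2 t_j) Z_L, using a second qubit to kill the off-diagonal part. *)
Lemma Compresses_zdiag (N : nat) (theta : nat -> R) (j : nat) : (2 <= N)%nat -> (j < N)%nat ->
  Compresses N theta (zdiag j) (cos (2 * theta j)) (- cos (2 * theta j)).
Proof.
  intros HN Hj.
  apply (Compresses_ext N theta (zstring N (fun l => Nat.eqb l j)));
    [intros; symmetry; apply zdiag_zstring; exact Hj|].
  set (other := if Nat.eqb j 0 then 1%nat else 0%nat).
  assert (Hother : (other < N)%nat /\ Nat.eqb other j = false).
  { unfold other. destruct (Nat.eqb_spec j 0); split; try lia; apply Nat.eqb_neq; lia. }
  destruct Hother as [Hlt Hsel].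
  destruct (zstring_matel_cross N theta (fun l => Nat.eqb l j) other Hlt Hsel) as [C01 C10].
  unfold Compresses. rewrite zstring_matel00, zstring_matel11, C01, C10.
  rewrite !(Cprod_single N j) by (auto; intros l _ Hl; apply Nat.eqb_neq in Hl; rewrite Hl; auto).
  rewrite Nat.eqb_refl. repeat split.
Qed.

Lemma third_qubit (j l : nat) : exists m, (m < 3)%nat /\ m <> j /\ m <> l.
Proof.
  destruct (Nat.eq_dec j 0), (Nat.eq_dec l 0), (Nat.eq_dec j 1), (Nat.eq_dec l 1);
    solve [exists 0%nat; lia | exists 1%nat; lia | exists 2%nat; lia].
Qed.

(* P Z_j Z_l P is a real multiple of P: cos(2 t_j) cos(2 t_l) P if j <> l, P if j = l. *)
Lemma Scalar_zdiag2 (N : nat) (theta : nat -> R) (j l : nat) :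
  (3 <= N)%nat -> (j < N)%nat -> (l < N)%nat ->
  CompressesToScalar N theta (fun k => Cmul (zdiag j k) (zdiag l k)).
Proof.
  intros HN Hj Hl.
  set (sel := fun m => xorb (Nat.eqb m j) (Nat.eqb m l)).
  destruct (third_qubit j l) as (m & Hm & Hmj & Hml).
  assert (Hsel : sel m = false)
    by (unfold sel; apply Nat.eqb_neq in Hmj, Hml; rewrite Hmj, Hml; reflexivity).
  destruct (zstring_matel_cross N theta sel m ltac:(lia) Hsel) as [C01 C10].
  assert (Hr : exists r, forall s, (s = 1 \/ s = -1) ->
            Cprod N (fun i => if sel i then RtoC (s * cos (2 * theta i)) else Cone) = RtoC r).
  { destruct (Nat.eq_dec j l) as [<-|Hjl].
    - exists 1. intros s _. apply Cprod_one. intros i _. unfold sel.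
      destruct (Nat.eqb i j); reflexivity.
    - exists (cos (2 * theta j) * cos (2 * theta l)). intros s Hs.
      rewrite (Cprod_double N j l) by (auto; intros i _ Hij Hil; unfold sel;
        apply Nat.eqb_neq in Hij, Hil; rewrite Hij, Hil; reflexivity).
      unfold sel. rewrite !Nat.eqb_refl, (proj2 (Nat.eqb_neq j l) Hjl),
        (proj2 (Nat.eqb_neq l j) (not_eq_sym Hjl)). cbn [xorb].
      rewrite <- RtoC_mul. f_equal. destruct Hs as [-> | ->]; ring. }
  destruct Hr as [r Hr]. exists r.
  apply (Compresses_ext N theta (zstring N sel));
    [intros; symmetry; apply zdiag2_zstring; assumption|].
  unfold Compresses. rewrite zstring_matel00, zstring_matel11, C01, C10.
  repeat split; [rewrite <- (Hr 1) by auto | rewrite <- (Hr (-1)) by auto];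
    apply Cprod_ext; intros i _; destruct (sel i); f_equal; ring.
Qed.

Definition DiagOn (N : nat) (A : Op) (d : nat -> Cx) : Prop :=
  forall i k, (i < dim N)%nat -> (k < dim N)%nat -> A i k = if Nat.eqb i k then d i else Czero.

Section DiagonalOperators.
Variable N : nat.

Lemma DiagOn_opeq (A B : Op) (d : nat -> Cx) : opeq N A B -> DiagOn N B d -> DiagOn N A d.
Proof. intros H D i k Hi Hk. rewrite H; auto. Qed.

Lemma DiagOn_I : DiagOn N Iop (fun _ => Cone).
Proof. intros i k _ _. reflexivity. Qed.

Lemma DiagOn_add (A B : Op) (d1 d2 : nat -> Cx) : DiagOn N A d1 -> DiagOn N B d2 ->
  DiagOn N (opadd A B) (fun k => Cadd (d1 k) (d2 k)).
Proof.
  intros H1 H2 i k Hi Hk. unfold opadd. rewrite H1, H2 by auto. destruct (Nat.eqb i k); ring.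
Qed.

Lemma DiagOn_scale (z : Cx) (A : Op) (d : nat -> Cx) :
  DiagOn N A d -> DiagOn N (opscale z A) (fun k => Cmul z (d k)).
Proof. intros H i k Hi Hk. unfold opscale. rewrite H by auto. destruct (Nat.eqb i k); ring. Qed.

Lemma DiagOn_sum (n : nat) (F : nat -> Op) (D : nat -> nat -> Cx) :
  (forall a, (a < n)%nat -> DiagOn N (F a) (D a)) ->
  DiagOn N (opsum n F) (fun k => Csum n (fun a => D a k)).
Proof.
  intros H i k Hi Hk. unfold opsum. destruct (Nat.eqb i k) eqn:E.
  - apply Csum_ext. intros a Ha. rewrite H, E; auto.
  - apply Csum_zero. intros a Ha. rewrite H, E; auto.
Qed.

Lemma mm_diag_r (A B : Op) (d : nat -> Cx) (i k : nat) :
  DiagOn N B d -> (k < dim N)%nat -> mm N A B i k = Cmul (A i k) (d k).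
Proof.
  intros HB Hk. unfold mm. rewrite (Csum_delta _ k).
  - rewrite HB, Nat.eqb_refl; auto.
  - exact Hk.
  - intros m Hm Hne. rewrite HB by auto. apply Nat.eqb_neq in Hne. rewrite Hne. ring.
Qed.

Lemma DiagOn_mm (A B : Op) (d1 d2 : nat -> Cx) : DiagOn N A d1 -> DiagOn N B d2 ->
  DiagOn N (mm N A B) (fun k => Cmul (d1 k) (d2 k)).
Proof.
  intros H1 H2 i k Hi Hk. rewrite (mm_diag_r A B d2) by assumption. rewrite H1 by assumption.
  destruct (Nat.eqb_spec i k); [subst|]; ring.
Qed.

Definition dotZdiag (w : nat -> R) (k : nat) : Cx :=
  Csum N (fun j => Cmul (RtoC (w j)) (zdiag j k)).

Lemma DiagOn_dotZ (w : nat -> R) : DiagOn N (dotZ N w) (dotZdiag w).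
Proof.
  intros i k Hi Hk. unfold dotZ, opsum, opscale, Zop, dotZdiag, zdiag.
  destruct (Nat.eqb_spec i k) as [<-|_].
  - reflexivity.
  - apply Csum_zero; intros; ring.
Qed.

End DiagonalOperators.

Lemma sandwich_diag (N : nat) (x0 x1 : Vec) (A : Op) (d : nat -> Cx) (i j : nat) :
  DiagOn N A d -> (i < dim N)%nat -> (j < dim N)%nat ->
  sandwich N (opadd (outer x0 x0) (outer x1 x1)) A i j =
  Cadd (Cadd (Cmul (Cmul (x0 i) (matel N d x0 x0)) (Cconj (x0 j)))
             (Cmul (Cmul (x0 i) (matel N d x0 x1)) (Cconj (x1 j))))
       (Cadd (Cmul (Cmul (x1 i) (matel N d x1 x0)) (Cconj (x0 j)))
             (Cmul (Cmul (x1 i) (matel N d x1 x1)) (Cconj (x1 j)))).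
Proof.
  intros HA Hi Hj. unfold sandwich, mm at 1.
  set (P := opadd (outer x0 x0) (outer x1 x1)).
  rewrite (Csum_ext _ _ (fun k => Cmul (Cmul (P i k) (d k)) (P k j)))
    by (intros k Hk; rewrite (mm_diag_r N P A d) by assumption; reflexivity).
  unfold P, opadd, outer, matel.
  rewrite (Csum_ext _ _ (fun k =>
    Cadd (Cadd (Cmul (Cmul (x0 i) (Cconj (x0 j))) (Cmul (Cconj (x0 k)) (Cmul (d k) (x0 k))))
               (Cmul (Cmul (x0 i) (Cconj (x1 j))) (Cmul (Cconj (x0 k)) (Cmul (d k) (x1 k)))))
         (Cadd (Cmul (Cmul (x1 i) (Cconj (x0 j))) (Cmul (Cconj (x1 k)) (Cmul (d k) (x0 k))))
               (Cmul (Cmul (x1 i) (Cconj (x1 j))) (Cmul (Cconj (x1 k)) (Cmul (d k) (x1 k)))))))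
    by (intros; ring).
  rewrite !Csum_add, !Csum_scal. ring.
Qed.

Section CodeCompression.
Variables (N : nat) (theta : nat -> R).

Lemma sandwich_scalar (A : Op) (d : nat -> Cx) :
  DiagOn N A d -> CompressesToScalar N theta d ->
  inRP N (sandwich N (Pcode N theta) A) (Pcode N theta).
Proof.
  intros HA [r (M00 & M11 & M01 & M10)]. exists r. intros i j Hi Hj.
  unfold Pcode. rewrite (sandwich_diag N _ _ A d i j HA Hi Hj), M00, M11, M01, M10.
  unfold opscale, opadd, outer. ring.
Qed.

Lemma sandwich_logicalZ (A : Op) (d : nat -> Cx) (r : R) :
  DiagOn N A d -> Compresses N theta d r (- r) ->
  opeq N (sandwich N (Pcode N theta) A) (opscale (RtoC r) (ZL N theta)).
Proof.
  intros HA (M00 & M11 & M01 & M10) i j Hi Hj.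
  unfold Pcode. rewrite (sandwich_diag N _ _ A d i j HA Hi Hj), M00, M11, M01, M10.
  unfold ZL, opscale, opadd, outer. rewrite RtoC_opp.
  replace (RtoC (-1)) with (Copp Cone) by (Cparts; ring). ring.
Qed.

End CodeCompression.

Section DephasingCode.
Variables (N : nat) (theta : nat -> R).

(* The identity compresses to P: a matrix element of the empty Z-string. *)
Lemma Compresses_identity : (1 <= N)%nat -> Compresses N theta (fun _ => Cone) 1 1.
Proof.
  intros HN. apply (Compresses_ext N theta (zstring N (fun _ => false))).
  { intros k _. unfold zstring. apply Cprod_one. reflexivity. }
  destruct (zstring_matel_cross N theta (fun _ => false) 0 ltac:(lia) eq_refl) as [C01 C10].
  unfold Compresses. rewrite zstring_matel00, zstring_matel11, C01, C10.
  rewrite !Cprod_one by reflexivity. repeat split.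
Qed.

Lemma code_orthonormal : (1 <= N)%nat ->
  inner N (ket0L N theta) (ket0L N theta) = Cone /\
  inner N (ket1L N theta) (ket1L N theta) = Cone /\
  inner N (ket0L N theta) (ket1L N theta) = Czero.
Proof.
  intros HN.
  assert (Hinner : forall x y, inner N x y = matel N (fun _ => Cone) x y)
    by (intros x y; unfold inner, matel; apply Csum_ext; intros; ring).
  destruct (Compresses_identity HN) as (M00 & M11 & M01 & _).
  rewrite !Hinner, M00, M11, M01. repeat split.
Qed.

Lemma Compresses_dotZ (v : nat -> R) : (2 <= N)%nat ->
  Compresses N theta (dotZdiag N v) (Rdot N v (cos2theta theta)) (- Rdot N v (cos2theta theta)).
Proof.
  intros HN.
  replace (- Rdot N v (cos2theta theta))
    with (Rsum N (fun j => v j * - cos (2 * theta j))).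
  2: { unfold Rdot, cos2theta. rewrite <- Rsum_opp. apply Rsum_ext; intros; ring. }
  apply (Compresses_sum N theta N (fun j k => Cmul (RtoC (v j)) (zdiag j k))).
  intros j Hj. apply Compresses_scal, Compresses_zdiag; assumption.
Qed.

Lemma sandwich_dotZ (v : nat -> R) : (2 <= N)%nat ->
  opeq N (sandwich N (Pcode N theta) (dotZ N v))
         (opscale (RtoC (Rdot N v (cos2theta theta))) (ZL N theta)).
Proof.
  intros HN. apply (sandwich_logicalZ N theta _ (dotZdiag N v)).
  - apply DiagOn_dotZ.
  - apply Compresses_dotZ; assumption.
Qed.

(* P (v.Z)(u.Z) P is a real multiple of P, by bilinearity from P Z_j Z_l P. *)
Lemma Scalar_dotZ_dotZ (v u : nat -> R) : (3 <= N)%nat ->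
  CompressesToScalar N theta (fun k => Cmul (dotZdiag N v k) (dotZdiag N u k)).
Proof.
  intros HN.
  apply (Scalar_ext N theta (fun k => Csum N (fun j => Csum N (fun l =>
           Cmul (RtoC (v j * u l)) (Cmul (zdiag j k) (zdiag l k)))))).
  { intros k _. unfold dotZdiag. rewrite Csum_mul.
    apply Csum_ext; intros; apply Csum_ext; intros. rewrite RtoC_mul; ring. }
  apply (Scalar_sum N theta N (fun j k => Csum N (fun l =>
           Cmul (RtoC (v j * u l)) (Cmul (zdiag j k) (zdiag l k))))); intros j Hj.
  apply (Scalar_sum N theta N (fun l k =>
           Cmul (RtoC (v j * u l)) (Cmul (zdiag j k) (zdiag l k)))); intros l Hl.
  apply (Scalar_scal N theta _ (fun k => Cmul (zdiag j k) (zdiag l k))).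
  apply Scalar_zdiag2; assumption.
Qed.

Lemma sandwich_dotZ_dotZ (v u : nat -> R) : (3 <= N)%nat ->
  inRP N (sandwich N (Pcode N theta) (mm N (dotZ N v) (dotZ N u))) (Pcode N theta).
Proof.
  intros HN. apply (sandwich_scalar N theta _ (fun k => Cmul (dotZdiag N v k) (dotZdiag N u k))).
  - apply DiagOn_mm; apply DiagOn_dotZ.
  - apply Scalar_dotZ_dotZ; assumption.
Qed.

(* If cos(2 t) is orthogonal to col(C), it is orthogonal to every eigenvector of C with
   a nonzero eigenvalue, so each Lindblad operator has zero logical component. *)
Lemma perp_col_Lindblad (C : nat -> nat -> R) (vs : nat -> nat -> R) (lam : nat -> R) (a : nat) :
  DephasingData N C vs lam -> perp_col N (cos2theta theta) C -> (a < N)%nat ->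
  sqrt (lam a) * Rdot N (vs a) (cos2theta theta) = 0.
Proof.
  intros (_ & _ & _ & Heig & _) Hperp Ha. specialize (Hperp (vs a)). unfold Rdot in *.
  rewrite (Rsum_ext _ _ (fun j => lam a * (vs a j * cos2theta theta j))) in Hperp
    by (intros; rewrite Heig by assumption; ring).
  rewrite Rsum_scal in Hperp.
  destruct (Rmult_integral _ _ Hperp) as [E|E]; rewrite E; [rewrite sqrt_0|]; ring.
Qed.

Definition Ldiag (vs : nat -> nat -> R) (lam : nat -> R) (a k : nat) : Cx :=
  Cmul (RtoC (sqrt (lam a))) (dotZdiag N (vs a) k).

Lemma Scalar_Ldiag (C : nat -> nat -> R) (vs : nat -> nat -> R) (lam : nat -> R) (a : nat) :
  (2 <= N)%nat -> DephasingData N C vs lam -> perp_col N (cos2theta theta) C -> (a < N)%nat ->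
  CompressesToScalar N theta (Ldiag vs lam a).
Proof.
  intros HN HD Hperp Ha. exists 0.
  pose proof (Compresses_scal N theta (sqrt (lam a)) _ _ _ (Compresses_dotZ (vs a) HN)) as H.
  rewrite <- Ropp_mult_distr_r, (perp_col_Lindblad C vs lam a HD Hperp Ha), Ropp_0 in H.
  exact H.
Qed.

(* Products L_a L_a' are combinations of Z_j Z_l, hence compress to multiples of P. *)
Lemma Scalar_Ldiag2 (vs : nat -> nat -> R) (lam : nat -> R) (a a' : nat) : (3 <= N)%nat ->
  CompressesToScalar N theta (fun k => Cmul (Ldiag vs lam a k) (Ldiag vs lam a' k)).
Proof.
  intros HN.
  apply (Scalar_ext N theta (fun k => Cmul (RtoC (sqrt (lam a) * sqrt (lam a')))
           (Cmul (dotZdiag N (vs a) k) (dotZdiag N (vs a') k))));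
    [intros; unfold Ldiag; rewrite RtoC_mul; ring |].
  apply (Scalar_scal N theta _ (fun k => Cmul (dotZdiag N (vs a) k) (dotZdiag N (vs a') k))).
  apply Scalar_dotZ_dotZ; assumption.
Qed.

(* P S P in R P for S in the Lindblad span: S is diagonal and every term compresses to a
   real multiple of P. *)
Lemma sandwich_Lindblad_span (C : nat -> nat -> R) (vs : nat -> nat -> R) (lam : nat -> R)
    (S : Op) : (3 <= N)%nat ->
  DephasingData N C vs lam -> perp_col N (cos2theta theta) C -> inLindbladSpan N vs lam S ->
  inRP N (sandwich N (Pcode N theta) S) (Pcode N theta).
Proof.
  intros HN HD Hperp (a0 & b & c & HS).
  assert (HL : forall a, DiagOn N (Lind N vs lam a) (Ldiag vs lam a))
    by (intros a; apply DiagOn_scale, DiagOn_dotZ).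
  set (Dlin := fun a k => Cmul (RtoC (b a)) (Ldiag vs lam a k)).
  set (Dquad := fun a k => Csum N (fun a' =>
                  Cmul (RtoC (c a a')) (Cmul (Ldiag vs lam a k) (Ldiag vs lam a' k)))).
  apply (sandwich_scalar N theta S (fun k => Cadd (Cmul (RtoC a0) Cone)
           (Cadd (Csum N (fun a => Dlin a k)) (Csum N (fun a => Dquad a k))))).
  - eapply DiagOn_opeq; [exact HS|].
    apply DiagOn_add; [apply DiagOn_scale, DiagOn_I | apply DiagOn_add].
    + apply DiagOn_sum. intros a _. apply DiagOn_scale, HL.
    + apply DiagOn_sum. intros a _. apply (DiagOn_sum N N _ (fun a' k =>
        Cmul (RtoC (c a a')) (Cmul (Ldiag vs lam a k) (Ldiag vs lam a' k)))).
      intros a' _. apply DiagOn_scale, DiagOn_mm; apply HL.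
  - apply Scalar_add; [| apply Scalar_add].
    + apply (Scalar_scal N theta a0 (fun _ => Cone)).
      exists 1. apply Compresses_identity. lia.
    + apply (Scalar_sum N theta N Dlin). intros a Ha.
      apply Scalar_scal, (Scalar_Ldiag C); auto. lia.
    + apply (Scalar_sum N theta N Dquad). intros a _.
      apply (Scalar_sum N theta N (fun a' k =>
        Cmul (RtoC (c a a')) (Cmul (Ldiag vs lam a k) (Ldiag vs lam a' k)))). intros a' _.
      apply (Scalar_scal N theta _ (fun k => Cmul (Ldiag vs lam a k) (Ldiag vs lam a' k))).
      apply Scalar_Ldiag2; assumption.
Qed.

Lemma sandwich_Ham (h : nat -> R) : (2 <= N)%nat ->
  opeq N (sandwich N (Pcode N theta) (Ham N h))
         (opscale (RtoC (1/2 * Rdot N h (cos2theta theta))) (ZL N theta)).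
Proof.
  intros HN. apply (sandwich_logicalZ N theta _ (fun k => Cmul (RtoC (1/2)) (dotZdiag N h k))).
  - apply DiagOn_scale, DiagOn_dotZ.
  - rewrite Ropp_mult_distr_r. apply Compresses_scal, Compresses_dotZ; assumption.
Qed.

End DephasingCode.

Theorem mainTheorem3 (N : nat) (theta : nat -> R) (HN : (3 <= N)%nat) :
  (inner N (ket0L N theta) (ket0L N theta) = Cone /\
   inner N (ket1L N theta) (ket1L N theta) = Cone /\
   inner N (ket0L N theta) (ket1L N theta) = Czero) /\
  (forall v u : nat -> R,
     opeq N (sandwich N (Pcode N theta) (dotZ N v))
            (opscale (RtoC (Rdot N v (cos2theta theta))) (ZL N theta)) /\
     inRP N (sandwich N (Pcode N theta) (mm N (dotZ N v) (dotZ N u))) (Pcode N theta)) /\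
  (forall (h : nat -> R) (C : nat -> nat -> R) (vs : nat -> nat -> R) (lam : nat -> R),
     DephasingData N C vs lam ->
     perp_col N (cos2theta theta) C ->
     (forall S : Op, inLindbladSpan N vs lam S ->
        inRP N (sandwich N (Pcode N theta) S) (Pcode N theta)) /\
     opeq N (sandwich N (Pcode N theta) (Ham N h))
            (opscale (RtoC (1/2 * Rdot N h (cos2theta theta))) (ZL N theta))).
Proof.
  split; [|split].
  - apply code_orthonormal. lia.
  - intros v u. split.
    + apply sandwich_dotZ. lia.
    + apply sandwich_dotZ_dotZ. exact HN.
  - intros h C vs lam HD Hperp. split.
    + intros S HS. apply (sandwich_Lindblad_span N theta C vs lam); assumption.
    + apply sandwich_Ham. lia.
Qed.
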